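(* Under the hypotheses of Lemma 2.2, let $\varphi(U)=\phi(U)-\phi(I)U+[T,U]$ with $T=P_1\phi(P_1)P_2+P_2\phi(P_2)P_1$. Then for all $U_{ij}\in\mathcal{U}_{ij}$ ($i,j=1,2$): (1) $\varphi(U_{11})\in\mathcal{U}_{11}$; (2) $\varphi(U_{22})\in\mathcal{U}_{22}$; (3) $P_1\varphi(U_{12})P_1=P_2\varphi(U_{12})P_2=0$; (4) $P_1\varphi(U_{21})P_1=P_2\varphi(U_{21})P_2=0$.
   Context: $\mathcal{U}=\begin{pmatrix}\mathcal{A}&\mathcal{M}\\ \mathcal{N}&\mathcal{B}\end{pmatrix}$ is a generalized matrix ring: $\mathcal{A},\mathcal{B}$ unital 2-torsion free rings, $\mathcal{M}$ a unital $(\mathcal{A},\mathcal{B})$-bimodule faithful on both sides, $\mathcal{N}$ a unital $(\mathcal{B},\mathcal{A})$-bimodule, with bimodule pairings $MN\in\mathcal{A}$, $NM\in\mathcal{B}$ satisfying $(MN)M'=M(NM')$, $(NM)N'=N(MN')$; $\mathcal{U}$ consists of $2\times2$ matrices with usual matrix operations and identity $I$. The hypotheses of Lemma 2.2: $\phi:\mathcal{U}\to\mathcal{U}$ is additive and $\phi(U)\circ V+U\circ\phi(V)=0$ whenever $UV=VU=0$. $X\circ Y=XY+YX$, $[X,Y]=XY-YX$. $P_1=\mathrm{diag}(I_{\mathcal{A}},0)$, $P_2=\mathrm{diag}(0,I_{\mathcal{B}})$, and $\mathcal{U}_{ij}=P_i\mathcal{U}P_j$. *)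

From HB Require Import structures.
From mathcomp Require Import all_boot all_order all_algebra.
Set Implicit Arguments. Unset Strict Implicit. Unset Printing Implicit Defensive.
Import GRing.Theory.
Local Open Scope ring_scope.

(* A generalized matrix ring (Morita context) U = [[A, M], [N, B]]:
   A, B unital rings; M an (A,B)-bimodule, N a (B,A)-bimodule (unital);
   pairings MN : M x N -> A and NM : N x M -> B which are bimodule maps,
   balanced, and satisfy (mn)m' = m(nm'), (nm)n' = n(mn'). *)
Record gmr := GMR {
  gA : nzRingType; gB : nzRingType; gM : zmodType; gN : zmodType;
  lA : gA -> gM -> gM;
  rB : gM -> gB -> gM;
  lB : gB -> gN -> gN;
  rA : gN -> gA -> gN;
  pMN : gM -> gN -> gA;
  pNM : gN -> gM -> gB;
  lA_addl : forall a a' m, lA (a + a') m = lA a m + lA a' m;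
  lA_addr : forall a m m', lA a (m + m') = lA a m + lA a m';
  lA_mul : forall a a' m, lA (a * a') m = lA a (lA a' m);
  lA_one : forall m, lA 1 m = m;
  rB_addl : forall m m' b, rB (m + m') b = rB m b + rB m' b;
  rB_addr : forall m b b', rB m (b + b') = rB m b + rB m b';
  rB_mul : forall m b b', rB m (b * b') = rB (rB m b) b';
  rB_one : forall m, rB m 1 = m;
  M_bimod : forall a m b, rB (lA a m) b = lA a (rB m b);
  lB_addl : forall b b' n, lB (b + b') n = lB b n + lB b' n;
  lB_addr : forall b n n', lB b (n + n') = lB b n + lB b n';
  lB_mul : forall b b' n, lB (b * b') n = lB b (lB b' n);
  lB_one : forall n, lB 1 n = n;
  rA_addl : forall n n' a, rA (n + n') a = rA n a + rA n' a;
  rA_addr : forall n a a', rA n (a + a') = rA n a + rA n a';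
  rA_mul : forall n a a', rA n (a * a') = rA (rA n a) a';
  rA_one : forall n, rA n 1 = n;
  N_bimod : forall b n a, rA (lB b n) a = lB b (rA n a);
  pMN_addl : forall m m' n, pMN (m + m') n = pMN m n + pMN m' n;
  pMN_addr : forall m n n', pMN m (n + n') = pMN m n + pMN m n';
  pMN_lA : forall a m n, pMN (lA a m) n = a * pMN m n;
  pMN_rA : forall m n a, pMN m (rA n a) = pMN m n * a;
  pMN_bal : forall m b n, pMN (rB m b) n = pMN m (lB b n);
  pNM_addl : forall n n' m, pNM (n + n') m = pNM n m + pNM n' m;
  pNM_addr : forall n m m', pNM n (m + m') = pNM n m + pNM n m';
  pNM_lB : forall b n m, pNM (lB b n) m = b * pNM n m;
  pNM_rB : forall n m b, pNM n (rB m b) = pNM n m * b;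
  pNM_bal : forall n a m, pNM (rA n a) m = pNM n (lA a m);
  MNM_assoc : forall m n m', lA (pMN m n) m' = rB m (pNM n m');
  NMN_assoc : forall n m n', lB (pNM n m) n' = rA n (pMN m n')
}.

Section GMat.
Variable G : gmr.

Record mat := Mat { e11 : gA G; e12 : gM G; e21 : gN G; e22 : gB G }.

Definition madd (X Y : mat) : mat :=
  Mat (e11 X + e11 Y) (e12 X + e12 Y) (e21 X + e21 Y) (e22 X + e22 Y).
Definition mopp (X : mat) : mat := Mat (- e11 X) (- e12 X) (- e21 X) (- e22 X).
Definition msub (X Y : mat) : mat := madd X (mopp Y).
Definition mzero : mat := Mat 0 0 0 0.
Definition mone : mat := Mat 1 0 0 1.
Definition mmul (X Y : mat) : mat :=
  Mat (e11 X * e11 Y + pMN (e12 X) (e21 Y))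
      (lA (e11 X) (e12 Y) + rB (e12 X) (e22 Y))
      (lB (e22 X) (e21 Y) + rA (e21 X) (e11 Y))
      (pNM (e21 X) (e12 Y) + e22 X * e22 Y).

Definition jord (X Y : mat) : mat := madd (mmul X Y) (mmul Y X).
Definition comm (X Y : mat) : mat := msub (mmul X Y) (mmul Y X).

Definition P1 : mat := Mat 1 0 0 0.
Definition P2 : mat := Mat 0 0 0 1.

Definition inUij (Pi Pj : mat) (X : mat) : Prop :=
  exists Y, X = mmul (mmul Pi Y) Pj.

End GMat.

Arguments mzero {G}.
Arguments mone {G}.
Arguments P1 {G}.
Arguments P2 {G}.

From HB Require Import structures.
From mathcomp Require Import all_boot all_order all_algebra.
Set Implicit Arguments.
Unset Strict Implicit.
Unset Printing Implicit Defensive.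

Import GRing.Theory.
Local Open Scope ring_scope.

(* The zero-product identity for the pair (P1, P2) forces phi P1 and phi P2
   to have opposite off-diagonal corners and (phi P1)_22 = (phi P2)_11 = 0,
   which makes T and phi I explicit.  For U in U_11 (resp. U_22) the pair
   (U, P2) (resp. (U, P1)) has zero products; the identity kills the opposite
   diagonal corner of phi U and fixes its off-diagonal corners to be those
   of -[T, U].  For U in U_12 or U_21 the pairs (U, U) and (P1 + U, P2 - U)
   have zero products, and 2-torsion freeness then identifies the diagonal
   of phi U with that of -[T, U]. *)

Lemma add_idem0 (V : zmodType) (x : V) : x + x = x -> x = 0.
Proof. by move=> h; apply: (addrI x); rewrite h addr0. Qed.

Lemma additive0 (U V : zmodType) (f : U -> V) : {morph f : x y / x + y} -> f 0 = 0.
Proof. by move=> fD; apply: add_idem0; rewrite -fD addr0. Qed.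

Lemma additiveN (U V : zmodType) (f : U -> V) :
  {morph f : x y / x + y} -> forall x, f (- x) = - f x.
Proof. by move=> fD x; apply/eqP; rewrite -addr_eq0 -fD addNr (additive0 fD). Qed.

Lemma addr0_eq_opp (V : zmodType) (x y : V) : x + y = 0 -> x = - y.
Proof. by move/addr0_eq <-; rewrite opprK. Qed.

Section BimoduleArith.
Variable G : gmr.
Implicit Types (a : gA G) (b : gB G) (m : gM G) (n : gN G).

Lemma lA0r a : lA a 0 = 0.
Proof. exact: (additive0 (lA_addr a)). Qed.
Lemma lA0l m : lA 0 m = 0.
Proof. exact: (@additive0 _ _ (fun x => lA x m) (fun a a' => lA_addl a a' m)). Qed.
Lemma lANr a m : lA a (- m) = - lA a m.
Proof. exact: (additiveN (lA_addr a)). Qed.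
Lemma rB0r m : rB m 0 = 0.
Proof. exact: (additive0 (rB_addr m)). Qed.
Lemma rB0l b : rB 0 b = 0.
Proof. exact: (@additive0 _ _ (fun x => rB x b) (fun m m' => rB_addl m m' b)). Qed.
Lemma rBNl m b : rB (- m) b = - rB m b.
Proof. exact: (@additiveN _ _ (fun x => rB x b) (fun m m' => rB_addl m m' b)). Qed.
Lemma lB0r b : lB b 0 = 0.
Proof. exact: (additive0 (lB_addr b)). Qed.
Lemma lB0l n : lB 0 n = 0.
Proof. exact: (@additive0 _ _ (fun x => lB x n) (fun b b' => lB_addl b b' n)). Qed.
Lemma lBNr b n : lB b (- n) = - lB b n.
Proof. exact: (additiveN (lB_addr b)). Qed.
Lemma rA0r n : rA n 0 = 0.
Proof. exact: (additive0 (rA_addr n)). Qed.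
Lemma rA0l a : rA 0 a = 0.
Proof. exact: (@additive0 _ _ (fun x => rA x a) (fun n n' => rA_addl n n' a)). Qed.
Lemma pMN0r m : pMN m 0 = 0.
Proof. exact: (additive0 (pMN_addr m)). Qed.
Lemma pMN0l n : pMN 0 n = 0.
Proof. exact: (@additive0 _ _ (fun x => pMN x n) (fun m m' => pMN_addl m m' n)). Qed.
Lemma pMNNr m n : pMN m (- n) = - pMN m n.
Proof. exact: (additiveN (pMN_addr m)). Qed.
Lemma pMNNl m n : pMN (- m) n = - pMN m n.
Proof. exact: (@additiveN _ _ (fun x => pMN x n) (fun m m' => pMN_addl m m' n)). Qed.
Lemma pNM0r n : pNM n 0 = 0.
Proof. exact: (additive0 (pNM_addr n)). Qed.
Lemma pNM0l m : pNM 0 m = 0.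
Proof. exact: (@additive0 _ _ (fun x => pNM x m) (fun n n' => pNM_addl n n' m)). Qed.
Lemma pNMNr n m : pNM n (- m) = - pNM n m.
Proof. exact: (additiveN (pNM_addr n)). Qed.
Lemma pNMNl n m : pNM (- n) m = - pNM n m.
Proof. exact: (@additiveN _ _ (fun x => pNM x m) (fun n n' => pNM_addl n n' m)). Qed.

Lemma mat_ext (X Y : mat G) :
  e11 X = e11 Y -> e12 X = e12 Y -> e21 X = e21 Y -> e22 X = e22 Y -> X = Y.
Proof. by case: X Y => ? ? ? ? [? ? ? ?] /= -> -> -> ->. Qed.

End BimoduleArith.

Ltac mat_simp := rewrite /= ?(lA0r, lA0l, lANr, rB0r, rB0l, rBNl,
  lB0r, lB0l, lBNr, rA0r, rA0l, pMN0r, pMN0l, pMNNr, pMNNl,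
  pNM0r, pNM0l, pNMNr, pNMNl, lA_one, rB_one, lB_one, rA_one,
  pMN_addl, pMN_addr, pNM_addl, pNM_addr,
  mul0r, mulr0, mul1r, mulr1, addr0, add0r, addNr, subrr, oppr0, opprK, opprD).

Section Corners.
Variable G : gmr.
Implicit Types (a : gA G) (b : gB G).

Lemma mat_eq0 (X : mat G) :
  X = mzero -> [/\ e11 X = 0, e12 X = 0, e21 X = 0 & e22 X = 0].
Proof. by move->. Qed.

Lemma corner11E (X : mat G) : mmul (mmul P1 X) P1 = Mat (e11 X) 0 0 0.
Proof. by apply: mat_ext; mat_simp. Qed.
Lemma corner22E (X : mat G) : mmul (mmul P2 X) P2 = Mat 0 0 0 (e22 X).
Proof. by apply: mat_ext; mat_simp. Qed.
Lemma corner12E (X : mat G) : mmul (mmul P1 X) P2 = Mat 0 (e12 X) 0 0.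
Proof. by apply: mat_ext; mat_simp. Qed.
Lemma corner21E (X : mat G) : mmul (mmul P2 X) P1 = Mat 0 0 (e21 X) 0.
Proof. by apply: mat_ext; mat_simp. Qed.

Lemma corner11_in a : inUij P1 P1 (Mat a 0 0 0 : mat G).
Proof. by exists (Mat a 0 0 0); rewrite corner11E. Qed.
Lemma corner22_in b : inUij P2 P2 (Mat 0 0 0 b : mat G).
Proof. by exists (Mat 0 0 0 b); rewrite corner22E. Qed.

End Corners.

Section ZeroProductDerivation.
Variable G : gmr.
Hypothesis torA : forall a : gA G, a + a = 0 -> a = 0.
Hypothesis torB : forall b : gB G, b + b = 0 -> b = 0.
Variable phi : mat G -> mat G.
Hypothesis phi_add : forall X Y, phi (madd X Y) = madd (phi X) (phi Y).
Hypothesis phi_zp : forall U V, mmul U V = mzero -> mmul V U = mzero ->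
  madd (jord (phi U) V) (jord U (phi V)) = mzero.

Definition phi_offdiag : mat G :=
  madd (mmul (mmul P1 (phi P1)) P2) (mmul (mmul P2 (phi P2)) P1).

Definition varphi (U : mat G) : mat G :=
  madd (msub (phi U) (mmul (phi mone) U)) (comm phi_offdiag U).

Lemma phi_mzero : phi mzero = mzero.
Proof.
have := phi_add mzero mzero.
rewrite [madd mzero mzero](_ : _ = mzero); last by apply: mat_ext; mat_simp.
case: (phi mzero) => a m n b [].
by move=> /esym/add_idem0 -> /esym/add_idem0 -> /esym/add_idem0 -> /esym/add_idem0 ->.
Qed.

Lemma phi_mopp X : phi (mopp X) = mopp (phi X).
Proof.
have := phi_add X (mopp X).
rewrite [madd X _](_ : _ = mzero) ?phi_mzero; last by apply: mat_ext; mat_simp.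
case: (phi X) (phi (mopp X)) => a m n b [a' m' n' b'] [].
by move=> /esym/addr0_eq <- /esym/addr0_eq <- /esym/addr0_eq <- /esym/addr0_eq <-.
Qed.

Local Notation a1 := (e11 (phi P1)).
Local Notation m2 := (e12 (phi P2)).
Local Notation n2 := (e21 (phi P2)).
Local Notation b2 := (e22 (phi P2)).

Lemma phi_P1_P2E : phi P1 = Mat a1 (- m2) (- n2) 0 /\ phi P2 = Mat 0 m2 n2 b2.
Proof.
have z12 : mmul P1 P2 = mzero :> mat G by apply: mat_ext; mat_simp.
have z21 : mmul P2 P1 = mzero :> mat G by apply: mat_ext; mat_simp.
case E1 : (phi P1) => [a m n b]; case E2 : (phi P2) => [a' m' n' b'] /=.
have [] := mat_eq0 (phi_zp z12 z21); rewrite E1 E2; mat_simp.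
by move=> /torA -> /addr0_eq_opp -> /addr0_eq_opp -> /torB ->.
Qed.

Lemma phi_offdiagE : phi_offdiag = Mat 0 (- m2) n2 0.
Proof.
by case: phi_P1_P2E => E1 E2; rewrite /phi_offdiag E1 E2; apply: mat_ext; mat_simp.
Qed.

Lemma phi_moneE : phi mone = Mat a1 0 0 b2.
Proof.
have -> : mone = madd P1 P2 :> mat G by apply: mat_ext; mat_simp.
by case: phi_P1_P2E => E1 E2; rewrite phi_add E1 E2; apply: mat_ext; mat_simp.
Qed.

Lemma varphi_corner11 a :
  varphi (Mat a 0 0 0) = Mat (e11 (phi (Mat a 0 0 0)) - a1 * a) 0 0 0.
Proof.
have z1 : mmul (Mat a 0 0 0) P2 = mzero by apply: mat_ext; mat_simp.
have z2 : mmul P2 (Mat a 0 0 0) = mzero by apply: mat_ext; mat_simp.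
have [_ E2] := phi_P1_P2E.
rewrite /varphi phi_offdiagE phi_moneE; case EU : (phi (Mat a 0 0 0)) => [x y z w].
have [] := mat_eq0 (phi_zp z1 z2); rewrite EU E2; mat_simp.
move=> _ /addr0_eq_opp -> /addr0_eq_opp -> /torB ->.
by apply: mat_ext; mat_simp.
Qed.

Lemma varphi_corner22 b :
  varphi (Mat 0 0 0 b) = Mat 0 0 0 (e22 (phi (Mat 0 0 0 b)) - b2 * b).
Proof.
have z1 : mmul (Mat 0 0 0 b) P1 = mzero by apply: mat_ext; mat_simp.
have z2 : mmul P1 (Mat 0 0 0 b) = mzero by apply: mat_ext; mat_simp.
have [E1 _] := phi_P1_P2E.
rewrite /varphi phi_offdiagE phi_moneE; case EU : (phi (Mat 0 0 0 b)) => [x y z w].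
have [] := mat_eq0 (phi_zp z1 z2); rewrite EU E1; mat_simp.
move=> /torA -> /subr0_eq -> /subr0_eq -> _.
by apply: mat_ext; mat_simp.
Qed.

Lemma varphi_corner12 m :
  e11 (varphi (Mat 0 m 0 0)) = 0 /\ e22 (varphi (Mat 0 m 0 0)) = 0.
Proof.
pose U := Mat 0 m 0 0 : mat G.
have zUU : mmul U U = mzero by apply: mat_ext; mat_simp.
have z1 : mmul (madd P1 U) (madd P2 (mopp U)) = mzero
  by apply: mat_ext; mat_simp.
have z2 : mmul (madd P2 (mopp U)) (madd P1 U) = mzero
  by apply: mat_ext; mat_simp.
have [E1 E2] := phi_P1_P2E.
rewrite /varphi phi_offdiagE phi_moneE; case EU : (phi U) => [x y z w].
have [] := mat_eq0 (phi_zp zUU zUU); rewrite EU; mat_simp.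
move=> /torA mz _ _ /torB zm.
(* Expanding the identity for (P1 + U, P2 - U) by additivity, the terms for
   (P1, P2) and (U, U) cancel by the two identities above. *)
have [] := mat_eq0 (phi_zp z1 z2); rewrite !phi_add phi_mopp EU E1 E2; mat_simp.
rewrite mz zm !subr0 => h11 _ _ h22; split.
  rewrite 2!addrA -addrA in h11.
  by apply/eqP; rewrite subr_eq0 eq_sym -subr_eq0 (torA h11).
rewrite -addrA addrC [pNM n2 m + w]addrC in h22.
exact: torB h22.
Qed.

Lemma varphi_corner21 n :
  e11 (varphi (Mat 0 0 n 0)) = 0 /\ e22 (varphi (Mat 0 0 n 0)) = 0.
Proof.
pose U := Mat 0 0 n 0 : mat G.
have zUU : mmul U U = mzero by apply: mat_ext; mat_simp.
have z1 : mmul (madd P1 U) (madd P2 (mopp U)) = mzero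
  by apply: mat_ext; mat_simp.
have z2 : mmul (madd P2 (mopp U)) (madd P1 U) = mzero
  by apply: mat_ext; mat_simp.
have [E1 E2] := phi_P1_P2E.
rewrite /varphi phi_offdiagE phi_moneE; case EU : (phi U) => [x y z w].
have [] := mat_eq0 (phi_zp zUU zUU); rewrite EU; mat_simp.
move=> /torA mz _ _ /torB zm.
have [] := mat_eq0 (phi_zp z1 z2); rewrite !phi_add phi_mopp EU E1 E2; mat_simp.
rewrite mz zm !subr0 => h11 _ _ h22; split.
  rewrite addrA [- x + _]addrC in h11.
  by apply/eqP; rewrite subr_eq0 eq_sym -subr_eq0 (torA h11).
rewrite addrC addrA (addrC (pNM n m2)) in h22.
exact: torB h22.
Qed.
End ZeroProductDerivation.

Theorem lemma2p5 (G : gmr)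
  (torA : forall a : gA G, a + a = 0 -> a = 0)
  (torB : forall b : gB G, b + b = 0 -> b = 0)
  (faithA : forall a : gA G, (forall m : gM G, lA a m = 0) -> a = 0)
  (faithB : forall b : gB G, (forall m : gM G, rB m b = 0) -> b = 0)
  (phi : mat G -> mat G)
  (phi_add : forall X Y, phi (madd X Y) = madd (phi X) (phi Y))
  (phi_zp : forall U V, mmul U V = mzero -> mmul V U = mzero ->
       madd (jord (phi U) V) (jord U (phi V)) = mzero) :
  let T := madd (mmul (mmul P1 (phi P1)) P2) (mmul (mmul P2 (phi P2)) P1) in
  let vphi := fun U => madd (msub (phi U) (mmul (phi mone) U)) (comm T U) in
  (forall U, inUij P1 P1 U -> inUij P1 P1 (vphi U)) /\
  (forall U, inUij P2 P2 U -> inUij P2 P2 (vphi U)) /\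
  (forall U, inUij P1 P2 U ->
      mmul (mmul P1 (vphi U)) P1 = mzero /\ mmul (mmul P2 (vphi U)) P2 = mzero) /\
  (forall U, inUij P2 P1 U ->
      mmul (mmul P1 (vphi U)) P1 = mzero /\ mmul (mmul P2 (vphi U)) P2 = mzero).
Proof.
move=> T vphi; have -> : vphi = varphi phi by [].
split; [|split; [|split]] => U [Y ->].
- by rewrite corner11E (varphi_corner11 torA torB phi_add phi_zp); apply: corner11_in.
- by rewrite corner22E (varphi_corner22 torA torB phi_add phi_zp); apply: corner22_in.
- have [V11 V22] := varphi_corner12 torA torB phi_add phi_zp (e12 Y).
  by rewrite corner12E corner11E corner22E V11 V22.
- have [V11 V22] := varphi_corner21 torA torB phi_add phi_zp (e21 Y).
  by rewrite corner21E corner11E corner22E V11 V22.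
Qed.
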